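(* Let $\mathcal{H}$ be a Hilbert space of finite dimension $d\ge2$, let $\mathcal{F}(\mathcal{H})\subseteq\mathcal{D}(\mathcal{H})$ be a closed set of free states (not assumed convex), and let $\rho\in\mathcal{D}(\mathcal{H})\setminus\mathcal{F}(\mathcal{H})$. Then there exists a family of channel ensembles $\big(\{p_i,\Lambda_i^{(m)}\}_i\big)_{m=2}^d$ such that \[\max_{\sigma\in\mathcal{F}(\mathcal{H})}\ \min_{m=2,\dots,d}\ \frac{\min_{\{M_i\}_i}p_{\mathrm{err}}(\{p_i,\Lambda_i^{(m)}\}_i,\{M_i\}_i,\rho^{\otimes m})}{\min_{\{M_i\}_i}p_{\mathrm{err}}(\{p_i,\Lambda_i^{(m)}\}_i,\{M_i\}_i,\sigma^{\otimes m})}<1.\]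
   Context: $\mathcal{D}(\mathcal{H})$ is the set of density operators on $\mathcal{H}$. A channel ensemble $\{p_i,\Lambda_i^{(m)}\}_i$ is a finite probability distribution $(p_i)_i$ with quantum channels $\Lambda_i^{(m)}$ from operators on $\mathcal{H}^{\otimes m}$ to operators on a common finite-dimensional output space. For a POVM $\{M_i\}_i$ on the output space (same index set) and a state $\omega$ on $\mathcal{H}^{\otimes m}$, the error probability of channel exclusion is $p_{\mathrm{err}}(\{p_i,\Lambda_i^{(m)}\}_i,\{M_i\}_i,\omega)=\sum_ip_i\operatorname{tr}[M_i\Lambda_i^{(m)}(\omega)]$; the minima are over all such POVMs. *)

From HB Require Import structures.
From mathcomp Require Import all_boot all_order all_algebra.
From mathcomp Require Import complex mxtens.
From mathcomp Require Import boolp classical_sets reals.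

Set Implicit Arguments.
Unset Strict Implicit.
Unset Printing Implicit Defensive.

Import Order.TTheory GRing.Theory Num.Theory.
Local Open Scope ring_scope.
Local Open Scope classical_set_scope.

Section QDefs.
Variable R : realType.
Local Notation C := (R[i]).

Definition adjmx m n (A : 'M[C]_(m, n)) : 'M[C]_(n, m) :=
  \matrix_(i, j) conjc (A j i).

Definition psdmx n (A : 'M[C]_n) : Prop :=
  forall v : 'cV[C]_n, 0 <= (adjmx v *m A *m v) 0 0.

Definition density n (A : 'M[C]_n) : Prop := psdmx A /\ \tr A = 1.

Definition tpow n (A : 'M[C]_n) (m : nat) : 'M[C]_(n ^ m) := ntensmx A m.

(* block (i,j) of X : 'M_(r*n), i.e. X = \sum_{i,j} E_ij (x) blk X i j *)
Definition blk r n (X : 'M[C]_(r * n)) (i j : 'I_r) : 'M[C]_n :=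
  \matrix_(a, b) X (mxtens_index (i, a)) (mxtens_index (j, b)).

(* (id_r (x) L) (X) *)
Definition id_tens r n k (L : 'M[C]_n -> 'M[C]_k) (X : 'M[C]_(r * n)) : 'M[C]_(r * k) :=
  \sum_(i < r) \sum_(j < r) (delta_mx i j *t L (blk X i j)).

Definition channel n k (L : {linear 'M[C]_n -> 'M[C]_k}) : Prop :=
  (forall r (X : 'M[C]_(r * n)), psdmx X -> psdmx (@id_tens r n k L X)) /\
  (forall X : 'M[C]_n, \tr (L X) = \tr X).

Definition prob_dist N (p : 'I_N -> R) : Prop :=
  (forall i, 0 <= p i) /\ \sum_(i < N) p i = 1.

Definition povm N k (M : 'I_N -> 'M[C]_k) : Prop :=
  (forall i, psdmx (M i)) /\ \sum_(i < N) M i = 1%:M.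

Definition channel_ensemble N n k (p : 'I_N -> R) (L : 'I_N -> {linear 'M[C]_n -> 'M[C]_k}) : Prop :=
  prob_dist p /\ forall i, channel (L i).

Definition perr N n k (p : 'I_N -> R) (L : 'I_N -> {linear 'M[C]_n -> 'M[C]_k})
  (M : 'I_N -> 'M[C]_k) (w : 'M[C]_n) : R :=
  complex.Re (\sum_(i < N) (p i)%:C%C * \tr (M i *m L i w)).

(* min over POVMs (taken as the infimum over all POVMs) *)
Definition perr_min N n k (p : 'I_N -> R) (L : 'I_N -> {linear 'M[C]_n -> 'M[C]_k})
  (w : 'M[C]_n) : R :=
  inf [set perr p L M w | M in [set M : 'I_N -> 'M[C]_k | povm M]].

(* closedness of a set of matrices (entrywise/norm topology on C^{n x n}),
   sequential form *)
Definition closed_mxset n (F : set 'M[C]_n) : Prop :=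
  forall (s : nat -> 'M[C]_n) (A : 'M[C]_n),
    (forall t, F (s t)) ->
    (forall i j (e : R), 0 < e -> exists T, forall t, (T <= t)%N ->
        `|s t i j - A i j| < (e%:C)%C) ->
    F A.

End QDefs.

(* Two copies suffice.  The 4 d^2 vectors u_(i,j,t) = e_i + i^t e_j of C^d form a tight
   frame (sum_a u_a u_a^* = 8d), so P_s(a) = <u_a, s u_a> / 8d is a probability
   distribution from which s can be read off.  On s (x) s, measure the frame twice,
   obtaining (a, b) with probability P_s(a) P_s(b); channel 0 then prepares |1> with
   probability h(a, b) = (delta_ab - r_a - r_b + 2) / 4, where r = P_rho, and |0>
   otherwise, while channel 1 always prepares |1>.  The optimal exclusion error is
   H(s) / 2 with H(s) = sum_ab P_s(a) P_s(b) h(a, b) = H(rho) + |P_s - r|^2 / 4, a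
   quadratic form in P_s minimised exactly at r.  Closedness of F keeps P_sigma
   uniformly away from r, which bounds H(rho) / H(sigma) away from 1; for m >= 3 a
   trace-and-replace ensemble with constant error 1/2 is used. *)
From HB Require Import structures.
From mathcomp Require Import all_boot all_order all_algebra.
From mathcomp Require Import complex mxtens.
From mathcomp Require Import boolp classical_sets reals.
From mathcomp Require Import ring lra zify.
Import Order.TTheory GRing.Theory Num.Theory.
Local Open Scope ring_scope.
Local Open Scope classical_set_scope.
Set Implicit Arguments.
Unset Strict Implicit.
Unset Printing Implicit Defensive.

Section MatrixTensor.
Variable R : comPzRingType.

Lemma sum_mxtens_index (V : nmodType) r n (F : 'I_(r * n) -> V) :
  \sum_p F p = \sum_i \sum_a F (mxtens_index (i, a)).
Proof.
rewrite pair_big /= (reindex (@mxtens_index r n)) /=; last first.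
  by exists (@mxtens_unindex r n) => x _; [rewrite mxtens_indexK|rewrite mxtens_unindexK].
by apply: eq_bigr => -[i a].
Qed.

Lemma sum_pair (V : nmodType) (I J : finType) (F : I * J -> V) :
  \sum_p F p = \sum_i \sum_j F (i, j).
Proof. by rewrite pair_bigA; apply: eq_bigr => -[]. Qed.

Lemma tensmx_sum (I J : finType) m n p q (F : I -> 'M[R]_(m, n)) (G : J -> 'M[R]_(p, q)) :
  \sum_a \sum_b (F a *t G b) = (\sum_a F a) *t (\sum_b G b).
Proof.
apply/matrixP => i j.
rewrite (summxE (index_enum _)) mxE (summxE (index_enum _)) (summxE (index_enum _)) mulr_suml.
apply: eq_bigr => a _; rewrite (summxE (index_enum _)) mulr_sumr; apply: eq_bigr => b _.
by rewrite mxE.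
Qed.

Lemma tensmxZ m n p q (x y : R) (A : 'M[R]_(m, n)) (B : 'M[R]_(p, q)) :
  (x *: A) *t (y *: B) = (x * y) *: (A *t B).
Proof. by apply/matrixP => i j; rewrite !mxE mulrACA. Qed.

Lemma tensmx1 m n : (1%:M : 'M[R]_m) *t (1%:M : 'M[R]_n) = 1%:M.
Proof.
apply/matrixP => i j.
case: (mxtens_indexP i) => i0 a {i}; case: (mxtens_indexP j) => j0 b {j}.
rewrite tensmxE !mxE (inj_eq (can_inj (@mxtens_indexK _ _))) xpair_eqE.
by case: (i0 == j0); case: (a == b); rewrite ?mul1r ?mul0r.
Qed.

Lemma mxtrace_tens m n (A : 'M[R]_m) (B : 'M[R]_n) : \tr (A *t B) = \tr A * \tr B.
Proof. by rewrite /mxtrace mulr_sum; apply: eq_bigr => p _; rewrite mxE. Qed.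

Lemma mxtrace_ntens n (A : 'M[R]_n) m : \tr A = 1 -> \tr (ntensmx A m) = 1.
Proof.
move=> trA; case: m => [|m]; first by rewrite /= mxtrace1.
by elim: m => [|m IH] //=; rewrite mxtrace_tens trA IH mul1r.
Qed.

Lemma mxtrace_mul_delta k (M : 'M[R]_k) o : \tr (M *m delta_mx o o) = M o o.
Proof.
rewrite /mxtrace (bigD1 o) //= big1 ?addr0.
  rewrite mxE (bigD1 o) //= big1 ?addr0; first by rewrite mxE !eqxx mulr1.
  by move=> j nj; rewrite mxE (negbTE nj) mulr0.
move=> j nj; rewrite mxE big1 // => l _; rewrite mxE.
by case: (j =P o) nj => [->|_ _]; rewrite ?eqxx //= andbF mulr0.
Qed.

Lemma delta_mx2_sum : delta_mx 1 1 + delta_mx 0 0 = 1%:M :> 'M[R]_2.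
Proof.
apply/matrixP => i j; rewrite !mxE.
by case: i => [[|[|i]] Hi] //; case: j => [[|[|j]] Hj] //=; rewrite ?add0r ?addr0.
Qed.

End MatrixTensor.

Section SesquilinearForm.
Variable R : realType.
Local Notation C := R[i].

Lemma adjmxK m n (A : 'M[C]_(m, n)) : adjmx (adjmx A) = A.
Proof. by apply/matrixP => i j; rewrite !mxE conjcK. Qed.

Lemma adjmxD m n (A B : 'M[C]_(m, n)) : adjmx (A + B) = adjmx A + adjmx B.
Proof. by apply/matrixP => i j; rewrite !mxE rmorphD. Qed.

Lemma adjmxZ m n (z : C) (A : 'M[C]_(m, n)) : adjmx (z *: A) = conjc z *: adjmx A.
Proof. by apply/matrixP => i j; rewrite !mxE rmorphM. Qed.

Lemma adjmxM m n p (A : 'M[C]_(m, n)) (B : 'M[C]_(n, p)) :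
  adjmx (A *m B) = adjmx B *m adjmx A.
Proof.
apply/matrixP => i j; rewrite !mxE rmorph_sum; apply: eq_bigr => k _.
by rewrite !mxE rmorphM mulrC.
Qed.

Lemma adjmx_delta m n (i : 'I_m) (j : 'I_n) :
  adjmx (delta_mx i j : 'M[C]_(m, n)) = delta_mx j i.
Proof. by apply/matrixP => a b; rewrite !mxE andbC rmorph_nat. Qed.

Lemma adjmx_tens m n p q (A : 'M[C]_(m, n)) (B : 'M[C]_(p, q)) :
  adjmx (A *t B) = adjmx A *t adjmx B.
Proof. by apply/matrixP => i j; rewrite !mxE rmorphM. Qed.

Lemma natrC n : (n%:R : C) = (n%:R : R)%:C%C.
Proof. by rewrite (rmorph_nat (real_complex R) n). Qed.

Lemma normC_real (x : R) : `|(x%:C)%C : C| = (`|x|)%:C%C.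
Proof. by rewrite normc_def /= expr0n /= addr0 sqrtr_sqr. Qed.

Lemma ge0_complex_real (z : C) : 0 <= z -> z = (complex.Re z)%:C%C.
Proof. by case: z => a b /ger0_Im /= ->. Qed.

Definition qform n (x : 'cV[C]_n) (Y : 'M[C]_n) (y : 'cV[C]_n) : C :=
  (adjmx x *m Y *m y) 0 0.

Lemma qformE n (x : 'cV[C]_n) Y y :
  qform x Y y = \sum_p \sum_q conjc (x p 0) * Y p q * y q 0.
Proof.
rewrite /qform mxE; under eq_bigr do rewrite mxE mulr_suml.
rewrite exchange_big; apply: eq_bigr => p _; apply: eq_bigr => q _.
by rewrite !mxE.
Qed.

Lemma qformDl n (x1 x2 : 'cV[C]_n) Y y :
  qform (x1 + x2) Y y = qform x1 Y y + qform x2 Y y.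
Proof. by rewrite /qform adjmxD !mulmxDl mxE. Qed.

Lemma qformDr n (x y1 y2 : 'cV[C]_n) Y :
  qform x Y (y1 + y2) = qform x Y y1 + qform x Y y2.
Proof. by rewrite /qform mulmxDr mxE. Qed.

Lemma qformZl n (x : 'cV[C]_n) (z : C) Y y : qform (z *: x) Y y = conjc z * qform x Y y.
Proof. by rewrite /qform adjmxZ -!scalemxAl mxE. Qed.

Lemma qformZr n (x y : 'cV[C]_n) (z : C) Y : qform x Y (z *: y) = z * qform x Y y.
Proof. by rewrite /qform -scalemxAr mxE. Qed.

Lemma qformB n (x : 'cV[C]_n) Y1 Y2 y : qform x (Y1 - Y2) y = qform x Y1 y - qform x Y2 y.
Proof. by rewrite /qform mulmxBr mulmxBl mxE !mxE. Qed.

Lemma qform_delta n (a b : 'I_n) (Y : 'M[C]_n) :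
  qform (delta_mx a 0) Y (delta_mx b 0) = Y a b.
Proof.
rewrite qformE pair_bigA (bigD1 (a, b)) //= big1 ?addr0.
  by rewrite !mxE !eqxx andbT rmorph_nat mul1r mulr1.
move=> [p q] /=; rewrite xpair_eqE negb_and !mxE !andbT => /orP[] /negbTE ->.
  by rewrite rmorph0 !mul0r.
by rewrite mulr0.
Qed.

Lemma qform_trace n (x : 'cV[C]_n) Y : qform x Y x = \tr (Y *m (x *m adjmx x)).
Proof.
have -> : qform x Y x = \tr (adjmx x *m Y *m x) by rewrite /mxtrace big_ord1.
by rewrite -(mulmxA (adjmx x)) mxtrace_mulC mulmxA.
Qed.

Lemma qform_tens m n (x : 'cV[C]_m) (y : 'cV[C]_n) A B :
  qform (x *t y) (A *t B) (x *t y) = qform x A x * qform y B y.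
Proof.
rewrite /qform (adjmx_tens x y) (tensmx_mul (adjmx x) (adjmx y) A B).
rewrite (tensmx_mul (adjmx x *m A) (adjmx y *m B) x y) mxE.
by rewrite [(mxtens_unindex _).1]ord1 [(mxtens_unindex _).2]ord1.
Qed.

Lemma outer_tens m n (x : 'cV[C]_m) (y : 'cV[C]_n) :
  (x *t y) *m adjmx (x *t y) = (x *m adjmx x) *t (y *m adjmx y).
Proof. by rewrite (adjmx_tens x y) (tensmx_mul x y (adjmx x) (adjmx y)). Qed.

Definition col_slice r n (v : 'cV[C]_(r * n)) (i : 'I_r) : 'cV[C]_n :=
  \col_a v (mxtens_index (i, a)) 0.

Lemma qform_blk r n (x : 'cV[C]_(r * n)) Y y :
  qform x Y y = \sum_i \sum_j qform (col_slice x i) (blk Y i j) (col_slice y j).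
Proof.
rewrite qformE sum_mxtens_index.
under eq_bigr do under eq_bigr do rewrite sum_mxtens_index.
apply: eq_bigr => i _; rewrite exchange_big /=; apply: eq_bigr => j _.
by rewrite qformE; apply: eq_bigr => a _; apply: eq_bigr => b _; rewrite !mxE.
Qed.

Lemma blk_id_tens r n k (L : 'M[C]_n -> 'M[C]_k) (X : 'M[C]_(r * n)) i j :
  blk (id_tens L X) i j = L (blk X i j).
Proof.
apply/matrixP => a b; rewrite /id_tens {1}/blk mxE (summxE (index_enum _)).
under eq_bigr do rewrite (summxE (index_enum _)).
under eq_bigr do under eq_bigr do rewrite tensmxE mxE.
rewrite pair_bigA (bigD1 (i, j)) //= big1 ?addr0 ?eqxx ?mul1r //.
move=> [i' j'] /=; rewrite xpair_eqE negb_and => H.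
case: (i =P i') H => [<-|_ _]; last by rewrite mul0r.
by rewrite eqxx /= => H; rewrite eq_sym (negbTE H) mul0r.
Qed.

Lemma psd_delta k (o : 'I_k) : psdmx (delta_mx o o : 'M[C]_k).
Proof.
move=> v; rewrite -/(qform v _ v) qformE pair_bigA (bigD1 (o, o)) //= big1 ?addr0.
  by rewrite mxE !eqxx mulr1 mulrC; apply: mulcJ_ge0.
move=> [p q] /=; rewrite xpair_eqE negb_and mxE => /orP[] /negbTE ->.
  by rewrite mulr0 mul0r.
by rewrite andbF mulr0 mul0r.
Qed.

Lemma povm_diag_real N k (M : 'I_N -> 'M[C]_k) : povm M ->
  forall i o, M i o o = (complex.Re (M i o o))%:C%C.
Proof.
move=> [psdM _] i o; apply: ge0_complex_real.
by have := psdM i (delta_mx o 0); rewrite -/(qform _ _ _) qform_delta.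
Qed.

Lemma povm2_diag (M : 'I_2 -> 'M[C]_2) o : povm M ->
  [/\ 0 <= complex.Re (M 0 o o), 0 <= complex.Re (M 1 o o) &
      complex.Re (M 0 o o) + complex.Re (M 1 o o) = 1].
Proof.
move=> pM; have [psdM sumM] := pM.
have ge0 i : 0 <= complex.Re (M i o o).
  have := psdM i (delta_mx o 0); rewrite -/(qform _ _ _) qform_delta.
  by rewrite (povm_diag_real pM) ler0c.
split => //; have := congr1 (fun A : 'M[C]_2 => complex.Re (A o o)) sumM.
rewrite /= big_ord_recr big_ord1 /= mxE !mxE eqxx /= raddfD /=.
have -> : widen_ord (leqnSn 1) ord0 = 0 :> 'I_2 by apply: val_inj.
by have -> : ord_max = 1 :> 'I_2 by apply: val_inj.
Qed.

End SesquilinearForm.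

Section Kraus.
Variable R : realType.
Local Notation C := R[i].

Definition kraus n k (S : finType) (c : S -> R) (K : S -> 'M[C]_(k, n))
  (X : 'M[C]_n) : 'M[C]_k := \sum_s (c s)%:C%C *: (K s *m X *m adjmx (K s)).

Lemma kraus_is_linear n k (S : finType) (c : S -> R) (K : S -> 'M[C]_(k, n)) :
  linear (kraus c K).
Proof.
move=> a X Y; rewrite /kraus scaler_sumr -big_split /=; apply: eq_bigr => s _.
by rewrite mulmxDr mulmxDl scalerDr -scalemxAr -scalemxAl !scalerA mulrC.
Qed.

Lemma qform_kraus m n (S : finType) (a : S -> C) (K : S -> 'M[C]_(m, n)) x Y y :
  qform x (\sum_s a s *: (K s *m Y *m adjmx (K s))) y =
  \sum_s a s * qform (adjmx (K s) *m x) Y (adjmx (K s) *m y).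
Proof.
rewrite /qform mulmx_sumr mulmx_suml (summxE (index_enum _)); apply: eq_bigr => s _.
rewrite -scalemxAr -scalemxAl mxE; congr (_ * _).
by rewrite adjmxM adjmxK !mulmxA.
Qed.

Lemma kraus_cp n k (S : finType) (c : S -> R) (K : S -> 'M[C]_(k, n)) :
  (forall s, 0 <= c s) ->
  forall r (X : 'M[C]_(r * n)), psdmx X -> psdmx (id_tens (kraus c K) X).
Proof.
move=> c0 r X pX v; rewrite -/(qform v _ v) qform_blk.
under eq_bigr do under eq_bigr do rewrite blk_id_tens qform_kraus.
under eq_bigr do rewrite exchange_big.
rewrite exchange_big /=; apply: sumr_ge0 => s _.
under eq_bigr do rewrite -mulr_sumr.
rewrite -mulr_sumr; apply: mulr_ge0; first by rewrite ler0c.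
pose W := \col_p ((adjmx (K s) *m col_slice v (mxtens_unindex p).1) (mxtens_unindex p).2 0).
have eW i : col_slice W i = adjmx (K s) *m col_slice v i.
  by apply/matrixP => a b; rewrite !mxE mxtens_indexK ord1.
have := pX W; rewrite -/(qform W X W) qform_blk.
by under eq_bigr do under eq_bigr do rewrite !eW.
Qed.

Lemma kraus_tp n k (S : finType) (c : S -> R) (K : S -> 'M[C]_(k, n)) :
  \sum_s (c s)%:C%C *: (adjmx (K s) *m K s) = 1%:M ->
  forall X, \tr (kraus c K X) = \tr X.
Proof.
move=> H X; rewrite /kraus raddf_sum /=.
under eq_bigr do rewrite mxtraceZ mxtrace_mulC mulmxA -mxtraceZ scalemxAl.
by rewrite -raddf_sum /= -mulmx_suml H mul1mx.
Qed.

End Kraus.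

HB.instance Definition _ (R : realType) n k (S : finType) (c : S -> R)
  (K : S -> 'M[R[i]]_(k, n)) :=
  GRing.isLinear.Build R[i] 'M[R[i]]_n 'M[R[i]]_k *:%R (kraus c K) (kraus_is_linear c K).

Section MeasurePrepare.
Variable R : realType.
Local Notation C := R[i].

Lemma kraus_channel n k (S : finType) (c : S -> R) (K : S -> 'M[C]_(k, n)) :
  (forall s, 0 <= c s) ->
  \sum_s (c s)%:C%C *: (adjmx (K s) *m K s) = 1%:M ->
  channel (kraus c K : {linear _ -> _}).
Proof. by move=> c0 H; split; [exact: kraus_cp | exact: kraus_tp]. Qed.

Definition mp_kraus n k (S : finType) (o : S -> 'I_k) (w : S -> 'cV[C]_n) (s : S) :
  'M[C]_(k, n) := delta_mx (o s) 0 *m adjmx (w s).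

Lemma mp_krausK n k (S : finType) (o : S -> 'I_k) (w : S -> 'cV[C]_n) s :
  adjmx (mp_kraus o w s) *m mp_kraus o w s = w s *m adjmx (w s).
Proof.
rewrite /mp_kraus adjmxM adjmxK adjmx_delta -!mulmxA (mulmxA (delta_mx 0 _)) mul_delta_mx.
have -> : (delta_mx 0 0 : 'M[C]_1) = 1%:M by apply/matrixP => i j; rewrite !ord1 !mxE.
by rewrite mul1mx.
Qed.

Lemma mp_kraus_conj n k (S : finType) (o : S -> 'I_k) (w : S -> 'cV[C]_n) s X :
  mp_kraus o w s *m X *m adjmx (mp_kraus o w s) = qform (w s) X (w s) *: delta_mx (o s) (o s).
Proof.
rewrite /mp_kraus adjmxM adjmxK adjmx_delta !mulmxA -(mulmxA _ (adjmx (w s))).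
rewrite -(mulmxA _ _ (w s)) [adjmx (w s) *m X *m w s]mx11_scalar mul_mx_scalar.
by rewrite -scalemxAl mul_delta_mx.
Qed.

Lemma mp_channel n k (S : finType) (c : S -> R) (o : S -> 'I_k) (w : S -> 'cV[C]_n) :
  (forall s, 0 <= c s) ->
  \sum_s (c s)%:C%C *: (w s *m adjmx (w s)) = 1%:M ->
  channel (kraus c (mp_kraus o w) : {linear _ -> _}).
Proof. by move=> c0 H; apply: kraus_channel => //; under eq_bigr do rewrite mp_krausK. Qed.

Lemma mxtrace_mul_mp n k (S : finType) (c : S -> R) (o : S -> 'I_k) (w : S -> 'cV[C]_n) M X :
  \tr (M *m kraus c (mp_kraus o w) X) =
  \sum_s (c s)%:C%C * qform (w s) X (w s) * M (o s) (o s).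
Proof.
rewrite /kraus mulmx_sumr raddf_sum; apply: eq_bigr => s _.
by rewrite mp_kraus_conj -!scalemxAr /= !mxtraceZ mxtrace_mul_delta mulrA.
Qed.

End MeasurePrepare.

Lemma inf_attained (R : realType) (E : set R) x :
  E x -> (forall y, E y -> x <= y) -> inf E = x.
Proof.
move=> Ex lb; apply/le_anti/andP; split; first by apply: ge_inf => //; exists x.
by apply: lb_le_inf => //; exists x.
Qed.

Section Replace.
Variable R : realType.
Local Notation C := R[i].

Definition half_prior (i : 'I_2) : R := 1 / 2.

Lemma half_prior_dist : prob_dist half_prior.
Proof.
split => [i|]; first by rewrite /half_prior; lra.
by rewrite big_ord_recr big_ord1 /half_prior /=; lra.
Qed.

Definition basis_povm (i : 'I_2) : 'M[C]_2 := if i == 0 then delta_mx 1 1 else delta_mx 0 0.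

Lemma povm_basis : povm basis_povm.
Proof.
split; first by move=> i; rewrite /basis_povm; case: (i == 0); apply: psd_delta.
by rewrite big_ord_recr big_ord1 /basis_povm /= delta_mx2_sum.
Qed.

Definition replace_chan n : {linear 'M[C]_n -> 'M[C]_2} :=
  kraus (fun _ : 'I_n => 1) (mp_kraus (fun _ => 1) (fun j => delta_mx j 0)).

Lemma replace_channel n : channel (replace_chan n).
Proof.
apply: mp_channel => [//|].
under eq_bigr do rewrite adjmx_delta mul_delta_mx rmorph1 scale1r.
by rewrite -mx1_sum_delta.
Qed.

Lemma perr_replace n (M : 'I_2 -> 'M[C]_2) (X : 'M[C]_n) : povm M -> \tr X = 1 ->
  perr half_prior (fun _ => replace_chan n) M X = 1 / 2.
Proof.
move=> pM trX; rewrite /perr /half_prior.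
have trM i : \tr (M i *m replace_chan n X) = M i 1 1.
  rewrite /replace_chan /= mxtrace_mul_mp.
  under eq_bigr do rewrite qform_delta rmorph1 mul1r.
  by rewrite -mulr_suml -/(mxtrace X) trX mul1r.
rewrite big_ord_recr big_ord1 /= !trM.
have [_ _ sum1] := povm2_diag 1 pM.
rewrite (povm_diag_real pM (widen_ord _ _)) (povm_diag_real pM ord_max) -!rmorphM -rmorphD /=.
have -> : widen_ord (leqnSn 1) ord0 = 0 :> 'I_2 by apply: val_inj.
have -> : ord_max = 1 :> 'I_2 by apply: val_inj.
by rewrite -mulrDr sum1 mulr1.
Qed.

Lemma perr_min_replace n (X : 'M[C]_n) : \tr X = 1 ->
  perr_min half_prior (fun _ => replace_chan n) X = 1 / 2.
Proof.
move=> trX; apply: inf_attained.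
  by exists basis_povm; [exact: povm_basis | exact: perr_replace povm_basis trX].
by move=> y [M pM <-]; rewrite perr_replace.
Qed.

End Replace.

Arguments half_prior {R}.
Arguments basis_povm {R}.
Arguments replace_chan {R}.
Arguments povm_basis {R}.

Lemma closed_mxset_sep (R : realType) d (F : set 'M[R[i]]_d) (rho : 'M[R[i]]_d) :
  closed_mxset F -> ~ F rho ->
  exists2 e : R, 0 < e & forall s, F s -> exists i j, ~ (`|s i j - rho i j| < (e%:C)%C).
Proof.
move=> cF nF; apply: contrapT => H.
have Hn n : exists s, F s /\ forall i j, `|s i j - rho i j| < ((n.+1%:R)^-1%:C)%C.
  apply: contrapT => Hn'; apply: H; exists (n.+1%:R)^-1; first by rewrite invr_gt0 ltr0n.
  move=> s Fs; apply: contrapT => K; apply: Hn'; exists s; split => // i j.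
  by apply: contrapT => K2; apply: K; exists i, j.
have [f hf] := choice Hn.
apply: nF; apply: (cF f) => [t|i j e e0]; first by case: (hf t).
have e0' : 0 <= e^-1 by rewrite invr_ge0 ltW.
exists (Num.Def.archi_bound e^-1) => t hT.
apply: (lt_le_trans (proj2 (hf t) i j)).
rewrite lecR -[e]invrK lef_pV2 ?posrE ?invr_gt0 ?ltr0n //.
apply: (le_trans (ltW (archi_boundP e0'))).
by rewrite ler_nat; lia.
Qed.

Section FourPhaseFrame.
Variable R : realType.
Local Notation C := R[i].
Variable d : nat.

Definition frame_idx := ('I_d * 'I_d * 'I_4)%type.

Definition phase (t : 'I_4) : C := 'i%C ^+ t.

Definition frame_vec (a : frame_idx) : 'cV[C]_d :=
  delta_mx a.1.1 0 + phase a.2 *: delta_mx a.1.2 0.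

Lemma sum_frame_idx (V : nmodType) (F : frame_idx -> V) :
  \sum_a F a = \sum_i \sum_j \sum_t F (i, j, t).
Proof. by rewrite pair_bigA /= pair_bigA /=; apply: eq_bigr => -[[i j] t]. Qed.

Lemma phase_mulJ t : phase t * conjc (phase t) = 1.
Proof.
rewrite /phase rmorphXn -exprMn.
have -> : ('i%C : C) * conjc 'i%C = 1 by apply/eqP; rewrite eq_complex /=; simpc.
by rewrite expr1n.
Qed.

Lemma norm_phase t : `|phase t| = 1.
Proof.
rewrite /phase normrX.
have -> : `|'i%C : C| = 1 by rewrite normc_def /= expr0n /= add0r expr1n sqrtr1.
by rewrite expr1n.
Qed.

Lemma sum_phase : \sum_t phase t = 0.
Proof.
rewrite !big_ord_recr big_ord0 /= /phase.
change (0 + 'i%C ^+ 0 + 'i%C ^+ 1 + 'i%C ^+ 2 + 'i%C ^+ 3 = 0 :> C).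
by rewrite !exprS expr0; simpc.
Qed.

Lemma sum_phaseJ : \sum_t conjc (phase t) = 0.
Proof. by rewrite -rmorph_sum sum_phase rmorph0. Qed.

Lemma sum_phaseJ2 : \sum_t conjc (phase t) ^+ 2 = 0.
Proof.
rewrite !big_ord_recr big_ord0 /= /phase.
change (0 + (conjc ('i%C ^+ 0)) ^+ 2 + (conjc ('i%C ^+ 1)) ^+ 2 + (conjc ('i%C ^+ 2)) ^+ 2
  + (conjc ('i%C ^+ 3)) ^+ 2 = 0 :> C).
by rewrite !exprS !expr0; simpc.
Qed.

Lemma qform_frame_vec i j t (Y : 'M[C]_d) :
  qform (frame_vec (i, j, t)) Y (frame_vec (i, j, t)) =
  Y i i + phase t * Y i j + conjc (phase t) * Y j i + Y j j.
Proof.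
rewrite /frame_vec /= qformDl !qformDr !qformZl !qformZr !qform_delta.
have := phase_mulJ t; set z := phase t; set w := conjc z => zw.
apply/eqP; rewrite -subr_eq0.
have -> : Y i i + z * Y i j + (w * Y j i + w * (z * Y j j)) -
   (Y i i + z * Y i j + w * Y j i + Y j j) = (z * w - 1) * Y j j by ring.
by rewrite zw subrr mul0r.
Qed.

(* The entry (i, j) survives the phase average because sum_t conj(i^t) and sum_t conj(i^t)^2 vanish. *)
Lemma frame_recover i j (Y : 'M[C]_d) :
  \sum_t conjc (phase t) * qform (frame_vec (i, j, t)) Y (frame_vec (i, j, t)) =
  4%:R * Y i j.
Proof.
transitivity (\sum_t (conjc (phase t) * (Y i i + Y j j) + Y i j + conjc (phase t) ^+ 2 * Y j i)).
  apply: eq_bigr => t _; rewrite qform_frame_vec.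
  have := phase_mulJ t; set z := phase t; set w := conjc z => zw.
  apply/eqP; rewrite -subr_eq0.
  have -> : w * (Y i i + z * Y i j + w * Y j i + Y j j) -
     (w * (Y i i + Y j j) + Y i j + w ^+ 2 * Y j i) = (z * w - 1) * Y i j by ring.
  by rewrite zw subrr mul0r.
rewrite !big_split /= -!mulr_suml sum_phaseJ sum_phaseJ2 !mul0r add0r addr0.
by rewrite sumr_const card_ord mulr_natl.
Qed.

Lemma frame_tight : \sum_a frame_vec a *m adjmx (frame_vec a) = (8 * d)%:R *: 1%:M.
Proof.
rewrite sum_frame_idx.
have outer i j t : frame_vec (i, j, t) *m adjmx (frame_vec (i, j, t)) =
    delta_mx i i + conjc (phase t) *: delta_mx i j + phase t *: delta_mx j i + delta_mx j j.
  rewrite /frame_vec /= adjmxD adjmxZ !adjmx_delta mulmxDl !mulmxDr -!scalemxAl -!scalemxAr.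
  by rewrite !mul_delta_mx scalerA phase_mulJ scale1r !addrA.
under eq_bigr do under eq_bigr do under eq_bigr do rewrite outer.
under eq_bigr do under eq_bigr do rewrite !big_split /= -!scaler_suml sum_phase sum_phaseJ
  !scale0r !addr0 !sumr_const card_ord.
under eq_bigr do rewrite big_split /= sumr_const card_ord.
rewrite big_split /= sumr_const card_ord !sumrMnl -mx1_sum_delta.
by rewrite scaler_nat -!mulrnA -mulrnDr; congr (_ *+ _); lia.
Qed.

Lemma sum_qform_frame Y : \sum_a qform (frame_vec a) Y (frame_vec a) = (8 * d)%:R * \tr Y.
Proof.
under eq_bigr do rewrite qform_trace.
by rewrite -raddf_sum -mulmx_sumr frame_tight /= -scalemxAr mulmx1 mxtraceZ.
Qed.

End FourPhaseFrame.

Arguments phase {R}.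
Arguments frame_vec {R d}.

Section ExclusionCost.
Variables (R : realFieldType) (I : finType) (r : I -> R).

Definition excl_cost (a b : I) : R := ((a == b)%:R - r a - r b + 2) / 4.

Definition cost_form (P : I -> R) : R := \sum_a \sum_b P a * P b * excl_cost a b.

Lemma cost_formE P : \sum_a P a = 1 ->
  cost_form P = (\sum_a ((P a - r a) ^+ 2 - r a ^+ 2) + 2) / 4.
Proof.
move=> P1; set T := \sum_b P b * r b.
have inner a : \sum_b P a * P b * excl_cost a b =
    1 / 4 * P a ^+ 2 + (1 / 2 - T / 4) * P a - 1 / 4 * (P a * r a).
  transitivity (\sum_b (P a / 4 * (P b * (a == b)%:R) + P a / 4 * (2 - r a) * P b
                 - P a / 4 * (P b * r b))).
    by apply: eq_bigr => b _; rewrite /excl_cost; ring.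
  rewrite sumrB big_split /= -!mulr_sumr -/T P1 mulr1.
  rewrite (bigD1 a) //= eqxx mulr1 big1 ?addr0; first by field.
  by move=> b nb; rewrite eq_sym (negbTE nb) mulr0.
have -> : \sum_a ((P a - r a) ^+ 2 - r a ^+ 2) = \sum_a P a ^+ 2 - 2 * T.
  by rewrite /T mulr_sumr -sumrB; apply: eq_bigr => a _; ring.
rewrite /cost_form; under eq_bigr => a _ do rewrite inner.
by rewrite sumrB big_split /= -!mulr_sumr P1 -/T; field.
Qed.

Hypothesis r_ge0 : forall a, 0 <= r a.
Hypothesis r_sum1 : \sum_a r a = 1.

Lemma dist_le1 a : r a <= 1.
Proof. by rewrite -r_sum1 (bigD1 a) //= lerDl; apply: sumr_ge0. Qed.

Lemma excl_cost_01 a b : 0 <= excl_cost a b <= 1.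
Proof.
have := r_ge0 a; have := r_ge0 b; have := dist_le1 a; have := dist_le1 b.
by rewrite /excl_cost; case: (a == b) => /=; move=> *; apply/andP; split; lra.
Qed.

Lemma cost_form_gap P : \sum_a P a = 1 ->
  cost_form P = cost_form r + (\sum_a (P a - r a) ^+ 2) / 4.
Proof.
move=> P1; rewrite !cost_formE // !sumrB.
have -> : \sum_a (r a - r a) ^+ 2 = 0 by apply: big1 => a _; rewrite subrr expr0n.
by field.
Qed.

Lemma cost_form_gt0 : 0 < cost_form r.
Proof.
have sq_le1 : \sum_a r a ^+ 2 <= 1.
  by rewrite -r_sum1; apply: ler_sum => a _; rewrite expr2 ler_piMl ?dist_le1.
rewrite cost_formE // sumrB.
have -> : \sum_a (r a - r a) ^+ 2 = 0 by apply: big1 => a _; rewrite subrr expr0n.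
lra.
Qed.

End ExclusionCost.

Section FrameMeasurement.
Variable R : realType.
Local Notation C := R[i].
Variable d : nat.
Hypothesis d_gt0 : (0 < d)%N.

Definition frame_prob (s : 'M[C]_d) (a : frame_idx d) : R :=
  complex.Re (qform (frame_vec a) s (frame_vec a)) / (8 * d)%:R.

Lemma frame_norm_neq0 : (8 * d)%:R != 0 :> R.
Proof. by rewrite pnatr_eq0; lia. Qed.

Lemma qform_frame_prob s : psdmx s ->
  forall a, qform (frame_vec a) s (frame_vec a) = ((8 * d)%:R * frame_prob s a)%:C%C.
Proof.
move=> ps a; rewrite /frame_prob mulrC divfK ?frame_norm_neq0 //.
by apply: ge0_complex_real; exact: ps.
Qed.

Lemma frame_prob_ge0 s : psdmx s -> forall a, 0 <= frame_prob s a.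
Proof.
move=> ps a; apply: divr_ge0; last by rewrite ler0n.
by have := ps (frame_vec a); rewrite lecE => /andP[].
Qed.

Lemma frame_prob_sum1 s : density s -> \sum_a frame_prob s a = 1.
Proof.
move=> [ps trs]; rewrite /frame_prob -mulr_suml -raddf_sum sum_qform_frame trs mulr1.
by rewrite natrC /= mulfV ?frame_norm_neq0.
Qed.

Lemma frame_prob_sep (s rho : 'M[C]_d) (i j : 'I_d) (e : R) :
  psdmx s -> psdmx rho -> ~ (`|s i j - rho i j| < (e%:C)%C) ->
  exists t, e <= (8 * d)%:R * `|frame_prob s (i, j, t) - frame_prob rho (i, j, t)|.
Proof.
move=> ps prho far.
pose D t := (8 * d)%:R * `|frame_prob s (i, j, t) - frame_prob rho (i, j, t)|.
have recover : \sum_t conjc (phase t) *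
    ((8 * d)%:R * (frame_prob s (i, j, t) - frame_prob rho (i, j, t)))%:C%C =
    4%:R * (s i j - rho i j).
  have -> : s i j - rho i j = (s - rho) i j by rewrite !mxE.
  rewrite -frame_recover; apply: eq_bigr => t _.
  by rewrite qformB (qform_frame_prob ps) (qform_frame_prob prho) -rmorphB -mulrBr.
have norm_sum := ler_norm_sum (index_enum 'I_4) (fun t => conjc (phase t) *
  ((8 * d)%:R * (frame_prob s (i, j, t) - frame_prob rho (i, j, t)))%:C%C) xpredT.
rewrite recover in norm_sum.
set nD := Num.sqrt (complex.Re (s i j - rho i j) ^+ 2 + complex.Im (s i j - rho i j) ^+ 2).
have e_le : e <= nD.
  rewrite leNgt; apply/negP => lt_nD; apply: far.
  by rewrite normc_def ltcR.
have sumD : 4%:R * nD <= \sum_(t < 4) D t.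
  move: norm_sum; rewrite normrM normr_nat (normc_def (s i j - rho i j)) natrC -rmorphM.
  under eq_bigr do rewrite normrM norm_conjC norm_phase mul1r normC_real normrM normr_nat.
  by rewrite -rmorph_sum lecR.
apply: contrapT => small.
have lt_e t : D t < e by rewrite ltNge; apply/negP => ge; apply: small; exists t.
have : \sum_(t < 4) D t < \sum_(t < 4) e.
  by apply: ltr_sum => //; apply/hasP; exists ord0; rewrite ?mem_index_enum.
rewrite sumr_const card_ord -mulr_natl => lt4e.
have := le_lt_trans sumD lt4e; rewrite ltr_pM2l ?ltr0n // ltNge.
by rewrite e_le.
Qed.

Lemma frame_prob_far (F : set 'M[C]_d) (rho : 'M[C]_d) :
  (forall s, F s -> psdmx s) -> closed_mxset F -> psdmx rho -> ~ F rho ->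
  exists2 del : R, 0 < del &
    forall s, F s -> del <= \sum_a (frame_prob s a - frame_prob rho a) ^+ 2.
Proof.
move=> Fpsd cF prho nF.
have [e e_gt0 He] := closed_mxset_sep cF nF.
have N_gt0 : 0 < (8 * d)%:R :> R by rewrite ltr0n; lia.
exists ((e / (8 * d)%:R) ^+ 2); first by rewrite exprn_gt0 // divr_gt0.
move=> s Fs; have [i [j far]] := He s Fs.
have [t ht] := frame_prob_sep (Fpsd _ Fs) prho far.
rewrite (bigD1 (i, j, t)) //= -[X in X <= _]addr0.
apply: lerD; last by apply: sumr_ge0 => a _; apply: sqr_ge0.
rewrite -[X in _ <= X]real_normK ?num_real //.
have h1 : e / (8 * d)%:R <= `|frame_prob s (i, j, t) - frame_prob rho (i, j, t)|.
  by rewrite ler_pdivrMr // mulrC.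
have h2 : 0 <= e / (8 * d)%:R by rewrite divr_ge0 // ltW.
by rewrite !expr2; apply: ler_pM.
Qed.

Variable r : frame_idx d -> R.

Definition pair_idx := (frame_idx d * frame_idx d * 'I_2)%type.

Lemma sum_pair_idx (V : nmodType) (F : pair_idx -> V) :
  \sum_x F x = \sum_a \sum_b \sum_o F (a, b, o).
Proof. by rewrite sum_pair (sum_pair (fun ab => \sum_o F (ab, o))). Qed.

Definition pair_vec (x : pair_idx) : 'cV[C]_(d * d) := frame_vec x.1.1 *t frame_vec x.1.2.

Definition excl_out (i : 'I_2) (a b : frame_idx d) (o : 'I_2) : R :=
  if i == 0 then (if o == 0 then 1 - excl_cost r a b else excl_cost r a b) else (o == 1)%:R.

Definition excl_weight (i : 'I_2) (x : pair_idx) : R :=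
  ((8 * d)%:R^-1) ^+ 2 * excl_out i x.1.1 x.1.2 x.2.

Definition excl_chan (i : 'I_2) : {linear 'M[C]_(d * d) -> 'M[C]_2} :=
  kraus (excl_weight i) (mp_kraus (fun x : pair_idx => x.2) pair_vec).

Lemma excl_weightE i a b o (Pa Pb : R) :
  excl_weight i (a, b, o) * (((8 * d)%:R * Pa) * ((8 * d)%:R * Pb)) =
  Pa * Pb * excl_out i a b o.
Proof.
rewrite /excl_weight /=.
transitivity ((((8 * d)%:R^-1 * (8 * d)%:R) ^+ 2 * (Pa * Pb * excl_out i a b o)) : R).
  by ring.
by rewrite mulVf ?frame_norm_neq0 // expr1n mul1r.
Qed.

Lemma excl_weight_tp i :
  \sum_x (excl_weight i x)%:C%C *: (pair_vec x *m adjmx (pair_vec x)) = 1%:M.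
Proof.
have out1 a b : \sum_o excl_out i a b o = 1.
  by rewrite big_ord_recr big_ord1 /excl_out /=; case: (i == 0) => /=; ring.
rewrite sum_pair; under eq_bigr => ab _.
  rewrite /pair_vec /= -scaler_suml -rmorph_sum -mulr_sumr.
  have -> : \sum_o excl_out i ab.1 ab.2 o = 1 by case: ab => a b; apply: out1.
  over.
rewrite -scaler_sumr sum_pair /=.
under eq_bigr do under eq_bigr do rewrite outer_tens.
rewrite tensmx_sum frame_tight tensmxZ tensmx1 scalerA natrC -!rmorphM /= mulr1.
by rewrite (natrM _ (8 * d)) expr2 mulrACA mulVf ?frame_norm_neq0 // mulr1 rmorph1 scale1r.
Qed.

Hypothesis r_ge0 : forall a, 0 <= r a.
Hypothesis r_sum1 : \sum_a r a = 1.

Lemma excl_weight_ge0 i x : 0 <= excl_weight i x.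
Proof.
apply: mulr_ge0; first by rewrite exprn_ge0 // invr_ge0 ler0n.
have /andP[h0 h1] := excl_cost_01 r_ge0 r_sum1 x.1.1 x.1.2.
rewrite /excl_out; case: (i == 0); last by case: (x.2 == 1); rewrite ?ler01 ?lexx.
by case: (x.2 == 0); lra.
Qed.

Lemma excl_chan_channel i : channel (excl_chan i).
Proof. exact: mp_channel (excl_weight_ge0 i) (excl_weight_tp i). Qed.

Lemma mxtrace_mul_excl i (M : 'M[C]_2) (s : 'M[C]_d) :
  \tr (M *m excl_chan i (s *t s)) =
  \sum_x (excl_weight i x)%:C%C * (qform (frame_vec x.1.1) s (frame_vec x.1.1) *
    qform (frame_vec x.1.2) s (frame_vec x.1.2)) * M x.2 x.2.
Proof.
rewrite /excl_chan /= mxtrace_mul_mp; apply: eq_bigr => x _.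
by rewrite /pair_vec qform_tens.
Qed.

Lemma perr_excl (s : 'M[C]_d) (M : 'I_2 -> 'M[C]_2) (al : 'I_2 -> 'I_2 -> R) :
  psdmx s -> (forall i o, M i o o = (al i o)%:C%C) ->
  perr half_prior excl_chan M (s *t s) =
  1 / 2 * \sum_a \sum_b frame_prob s a * frame_prob s b *
    ((1 - excl_cost r a b) * al 0 0 + excl_cost r a b * al 0 1 + al 1 1).
Proof.
move=> ps hM; have hQ := qform_frame_prob ps.
rewrite /perr /half_prior big_ord_recr big_ord1 /= !mxtrace_mul_excl.
have -> : widen_ord (leqnSn 1) ord0 = 0 :> 'I_2 by apply: val_inj.
have -> : ord_max = 1 :> 'I_2 by apply: val_inj.
set RHS := (X in _ = X).
under eq_bigr do rewrite !hQ hM -!rmorphM.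
under [in X in _ + X]eq_bigr do rewrite !hQ hM -!rmorphM.
rewrite -!rmorph_sum -!rmorphM -rmorphD /=.
rewrite !sum_pair_idx -mulrDr -big_split /=; congr (_ * _).
apply: eq_bigr => a _; rewrite -big_split /=; apply: eq_bigr => b _.
rewrite !big_ord_recr !big_ord0 /= !add0r !excl_weightE /excl_out /=.
have -> : widen_ord (leqnSn 1) ord_max = 0 :> 'I_2 by apply: val_inj.
have -> : ord_max = 1 :> 'I_2 by apply: val_inj.
ring.
Qed.

Lemma perr_min_excl s : density s ->
  perr_min half_prior excl_chan (s *t s) = 1 / 2 * cost_form r (frame_prob s).
Proof.
move=> [ps _]; apply: inf_attained.
  exists basis_povm; first exact: povm_basis.
  rewrite (perr_excl ps (povm_diag_real povm_basis)) /cost_form; congr (_ * _).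
  apply: eq_bigr => a _; apply: eq_bigr => b _.
  by rewrite /basis_povm /= !mxE /=; ring.
move=> y [M pM <-].
rewrite (perr_excl ps (povm_diag_real pM)) /cost_form.
apply: ler_wpM2l; first lra.
apply: ler_sum => a _; apply: ler_sum => b _.
apply: ler_wpM2l; first by apply: mulr_ge0; apply: frame_prob_ge0.
have [M0_ge0 _ _] := povm2_diag 0 pM.
have [_ M1_ge0 M_sum1] := povm2_diag 1 pM.
have /andP[h0 h1] := excl_cost_01 r_ge0 r_sum1 a b.
nra.
Qed.

Definition excl_family (m : nat) : 'I_2 -> {linear 'M[C]_(d ^ m) -> 'M[C]_2} :=
  match m return 'I_2 -> {linear 'M[C]_(d ^ m) -> 'M[C]_2} with
  | 2 => excl_chan
  | m' => fun _ => replace_chan (d ^ m')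
  end.

Lemma excl_family_ensemble m : channel_ensemble half_prior (excl_family m).
Proof.
split; first exact: half_prior_dist.
by case: m => [|[|[|m]]] i; [exact: replace_channel | exact: replace_channel
  | exact: excl_chan_channel | exact: replace_channel].
Qed.

Lemma perr_min_excl_family2 s : density s ->
  perr_min half_prior (excl_family 2) (tpow s 2) = 1 / 2 * cost_form r (frame_prob s).
Proof. exact: perr_min_excl. Qed.

Lemma perr_min_excl_family_neq2 m s : m != 2 -> density s ->
  perr_min half_prior (excl_family m) (tpow s m) = 1 / 2.
Proof.
by case: m => [|[|[|m]]] // _ [_ trs]; apply: perr_min_replace; apply: mxtrace_ntens.
Qed.

End FrameMeasurement.

Lemma scaled_ratio_le (R : realFieldType) (k h H del : R) :
  0 < k -> 0 < h -> 0 <= del -> h + del <= H -> k * h / (k * H) <= h / (h + del).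
Proof.
move=> k_gt0 h_gt0 del_ge0 hH.
rewrite -mulf_div divff ?gt_eqF // mul1r ler_pM2l // lef_pV2 ?posrE //; lra.
Qed.

Theorem theorem11 (R : realType) (d : nat) (F : set 'M[R[i]]_d) (rho : 'M[R[i]]_d) :
  (2 <= d)%N ->
  F `<=` [set s | density s] ->
  closed_mxset F ->
  density rho -> ~ F rho ->
  exists (N k : nat) (p : 'I_N -> R)
         (L : forall m : nat, 'I_N -> {linear 'M[R[i]]_(d ^ m) -> 'M[R[i]]_k}),
    (forall m, (2 <= m <= d)%N -> channel_ensemble p (L m)) /\
    (forall sigma, F sigma -> forall m, (2 <= m <= d)%N ->
        0 < perr_min p (L m) (tpow sigma m)) /\
    exists c : R, c < 1 /\
      forall sigma, F sigma -> exists m, (2 <= m <= d)%N /\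
        perr_min p (L m) (tpow rho m) / perr_min p (L m) (tpow sigma m) <= c.
Proof.
move=> d_ge2 F_dens cF rho_dens rho_notF.
have d_gt0 : (0 < d)%N by lia.
set r := frame_prob rho.
have r_ge0 : forall a, 0 <= r a := frame_prob_ge0 rho_dens.1.
have r_sum1 : \sum_a r a = 1 := frame_prob_sum1 d_gt0 rho_dens.
set H := fun s => cost_form r (frame_prob s).
have H_gt0 : 0 < H rho := cost_form_gt0 r_ge0 r_sum1.
have [del del_gt0 far] :=
  frame_prob_far d_gt0 (fun s Fs => (F_dens s Fs).1) cF rho_dens.1 rho_notF.
have H_far s : F s -> H rho + del / 4 <= H s.
  move=> Fs; rewrite /H /= (cost_form_gap r_sum1 (frame_prob_sum1 d_gt0 (F_dens _ Fs))).
  by rewrite lerD2l ler_pM2r ?invr_gt0 // far.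
exists 2, 2, half_prior, (excl_family r); split.
  by move=> m _; apply: excl_family_ensemble.
split.
  move=> s Fs m _; have ds := F_dens _ Fs; have [->|m_neq2] := eqVneq m 2.
    by rewrite perr_min_excl_family2 // -/(H s); have := H_far s Fs; lra.
  by rewrite perr_min_excl_family_neq2 //; lra.
exists (H rho / (H rho + del / 4)); split; first by rewrite ltr_pdivrMr; lra.
move=> s Fs; exists 2; split; first by rewrite leqnn d_ge2.
rewrite !perr_min_excl_family2 //; last exact: F_dens.
by apply: scaled_ratio_le; [lra | exact: H_gt0 | lra | exact: H_far].
Qed.
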